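(* Let $\omega$ be a good weight function satisfying $\omega(t)=o(t)$ as $t\to\infty$, with associated weight matrix $\{W^x\}_{x>0}$. Then for every $x>0$ there exist $y_3\ge y_2\ge y_1\ge x$ and $D\ge1$ such that for all $t>0$ $$\overline{\Gamma}_{w^{y_3}}(D^3t)\le\underline{\Gamma}_{w^{y_2}}(D^2t)\le\overline{\Gamma}_{w^{y_2}}(D^2t)\le\underline{\Gamma}_{w^{y_1}}(Dt)\le\frac{\underline{\Gamma}_{w^x}(t)}{2}.$$ Moreover one may choose $y_1\ge2x$ and $y_2\ge2y_1$, so that $w^x_{j+k}\le w^{y_1}_jw^{y_1}_k$ and $w^{y_1}_{j+k}\le w^{y_2}_jw^{y_2}_k$ for all $j,k\in\mathbb{N}$.
   Context: A weight function is a continuous increasing $\omega:[0,\infty)\to[0,\infty)$ with $\omega(0)=0$, $\omega(t)\to\infty$, $\omega(2t)=O(\omega(t))$, $\omega(t)=O(t)$, $\log t=o(\omega(t))$, and $\varphi(t)=\omega(e^t)$ convex; normalized so that $\omega|_{[0,1]}=0$, $\varphi^*(t)=\sup_{s\ge0}(st-\varphi(s))$. Its weight matrix is $W^x_k=\exp(\frac1x\varphi^*(xk))$, $x>0$, and $\vartheta^x_k=W^x_k/W^x_{k-1}$, $w^x_k=W^x_k/k!$. $\omega$ is good if $\forall x>0\ \exists y>0\ \exists C\ge1\ \forall 1\le j\le k:\ \vartheta^x_j/j\le C\vartheta^y_k/k$. For a positive sequence $m$ with $m_0=1$, $m_k^{1/k}\to\infty$, $m_{k+1}/m_k\to\infty$: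 $h_m(t)=\inf_k m_kt^k$, $\overline{\Gamma}_m(t)=\min\{k:h_m(t)=m_kt^k\}$, $\underline{\Gamma}_m(t)=\min\{k:m_{k+1}/m_k\ge1/t\}$ for $t>0$. *)

From Stdlib Require Import Reals Arith ClassicalEpsilon.
Open Scope R_scope.

(** Weight functions  omega : [0,oo) -> [0,oo), represented as R -> R
    (values on negative arguments are irrelevant). *)

Definition phi (omega : R -> R) (t : R) : R := omega (exp t).

Definition is_weight_function (omega : R -> R) : Prop :=
  (forall t, 0 <= t -> forall eps, 0 < eps -> exists delta, 0 < delta /\
       forall s, 0 <= s -> Rabs (s - t) < delta -> Rabs (omega s - omega t) < eps) /\
  (forall s t, 0 <= s -> s <= t -> omega s <= omega t) /\
  (forall t, 0 <= t -> 0 <= omega t) /\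
  omega 0 = 0 /\
  (forall M, exists T, forall t, T <= t -> M <= omega t) /\
  (exists C T, 0 < C /\ forall t, T <= t -> omega (2 * t) <= C * omega t) /\
  (exists C T, 0 < C /\ forall t, T <= t -> omega t <= C * t) /\
  (forall eps, 0 < eps -> exists T, forall t, T <= t -> ln t <= eps * omega t) /\
  (forall a b l, 0 <= l <= 1 ->
     phi omega (l * a + (1 - l) * b) <= l * phi omega a + (1 - l) * phi omega b) /\
  (forall t, 0 <= t <= 1 -> omega t = 0).

(** Young conjugate  phi*(t) = sup_{s >= 0} (s t - phi(s))
    (the least upper bound, chosen by classical description; it exists for
    weight functions and nonnegative t). *)
Definition phi_star (omega : R -> R) (t : R) : R :=
  epsilon (inhabits 0)
    (fun L => is_lub (fun v => exists s, 0 <= s /\ v = s * t - phi omega s) L).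

Definition W (omega : R -> R) (x : R) (k : nat) : R :=
  exp (/ x * phi_star omega (x * INR k)).

Definition theta (omega : R -> R) (x : R) (k : nat) : R :=
  W omega x k / W omega x (k - 1).

Definition wseq (omega : R -> R) (x : R) (k : nat) : R :=
  W omega x k / INR (Factorial.fact k).

Definition is_good (omega : R -> R) : Prop :=
  forall x, 0 < x -> exists y, 0 < y /\ exists C, 1 <= C /\
    forall j k : nat, (1 <= j)%nat -> (j <= k)%nat ->
      theta omega x j / INR j <= C * (theta omega y k / INR k).

Definition is_glb (E : R -> Prop) (l : R) : Prop :=
  (forall v, E v -> l <= v) /\ (forall b, (forall v, E v -> b <= v) -> b <= l).

Definition h_fun (m : nat -> R) (t : R) : R :=
  epsilon (inhabits 0) (is_glb (fun v => exists k, v = m k * t ^ k)).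

Definition Gamma_bar (m : nat -> R) (t : R) : nat :=
  epsilon (inhabits 0%nat)
    (fun n => h_fun m t = m n * t ^ n /\
              forall k, h_fun m t = m k * t ^ k -> (n <= k)%nat).

Definition Gamma_under (m : nat -> R) (t : R) : nat :=
  epsilon (inhabits 0%nat)
    (fun n => m (S n) / m n >= / t /\
              forall k, m (S k) / m k >= / t -> (n <= k)%nat).

From Stdlib Require Import Reals Lra Lia Psatz ClassicalEpsilon Classical Wf_nat.
Open Scope R_scope.

(* By Young duality, [log theta^x_k] is the slope of the convex function
   [phi*/x] over the step [[x(k-1), xk]], so it increases with [x] and [k],
   and [omega = o(t)] forces [theta^x_k / k -> oo]; in particular every
   [Gamma_under] is finite.  The ratios [w_(k+1)/w_k = theta_(k+1)/(k+1)]
   govern both indices: once they stay above [1/t] from [K] on, the terms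
   [w_k t^k] increase beyond [K], whence [Gamma_under <= Gamma_bar <= K].
   Goodness transports this threshold from [w^a] to [w^b] at the cost of a
   factor [D] in [t], and comparing [theta^x_n] with [theta^(4x)_m] for
   [m <= n <= 2m] halves the index.  The product inequalities come from the
   convexity of [phi*] and [j! k! <= (j+k)!]. *)

Lemma exp_le_mono a b : a <= b -> exp a <= exp b.
Proof.
  intros [Hlt | ->]; [left; apply exp_increasing, Hlt | lra].
Qed.

Lemma Rdiv_le_cross p q r s : 0 < q -> 0 < s -> p * s <= r * q -> p / q <= r / s.
Proof.
  intros Hq Hs H. apply Rmult_le_reg_r with (q * s); [nra |].
  replace (p / q * (q * s)) with (p * s) by (field; lra).
  replace (r / s * (q * s)) with (r * q) by (field; lra). exact H.
Qed.

Section ConvexSlopes.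

Variable f : R -> R.
Hypothesis f_convex : forall a b l, 0 <= a -> 0 <= b -> 0 <= l <= 1 ->
  f (l * a + (1 - l) * b) <= l * f a + (1 - l) * f b.

Lemma convex_chord a b d : 0 <= a -> a <= b <= d -> a < d ->
  (d - a) * f b <= (d - b) * f a + (b - a) * f d.
Proof.
  intros Ha [Hab Hbd] Had.
  set (l := (d - b) / (d - a)).
  assert (Hl : l * (d - a) = d - b) by (unfold l; field; lra).
  assert (Hl01 : 0 <= l <= 1) by (split; nra).
  pose proof (f_convex a d l Ha ltac:(lra) Hl01) as H.
  replace (l * a + (1 - l) * d) with b in H by nra.
  nra.
Qed.

Lemma slope_le_right a b d : 0 <= a -> a < b <= d ->
  (f b - f a) / (b - a) <= (f d - f a) / (d - a).
Proof.
  intros Ha [Hab Hbd]. pose proof (convex_chord a b d Ha ltac:(lra) ltac:(lra)).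
  apply Rdiv_le_cross; nra.
Qed.

Lemma slope_le_left a c d : 0 <= a -> a <= c < d ->
  (f d - f a) / (d - a) <= (f d - f c) / (d - c).
Proof.
  intros Ha [Hac Hcd]. pose proof (convex_chord a c d Ha ltac:(lra) ltac:(lra)).
  apply Rdiv_le_cross; nra.
Qed.

Lemma slope_mono a b c d : 0 <= a -> a < b -> c < d -> a <= c -> b <= d ->
  (f b - f a) / (b - a) <= (f d - f c) / (d - c).
Proof.
  intros Ha Hab Hcd Hac Hbd.
  apply Rle_trans with ((f d - f a) / (d - a)).
  - apply slope_le_right; lra.
  - apply slope_le_left; lra.
Qed.

End ConvexSlopes.

Section YoungConjugate.

Variable omega : R -> R.
Hypothesis Hw : is_weight_function omega.

Let Young_set t := fun v => exists s, 0 <= s /\ v = s * t - phi omega s.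

Lemma phi_nonneg s : 0 <= phi omega s.
Proof. destruct Hw as (_ & _ & Hpos & _). apply Hpos. left; apply exp_pos. Qed.

Lemma phi_0 : phi omega 0 = 0.
Proof.
  destruct Hw as (_ & _ & _ & _ & _ & _ & _ & _ & _ & Hnorm).
  unfold phi. rewrite exp_0. apply Hnorm. lra.
Qed.

(* Since [s = ln (exp s) = o(phi s)], the affine terms [s t - phi s] are
   eventually negative. *)
Lemma Young_set_bound t : 0 <= t -> bound (Young_set t).
Proof.
  intros Ht. destruct Hw as (_ & _ & _ & _ & _ & _ & _ & Hln & _).
  destruct (Hln (/ (t + 1))) as [T HT]; [apply Rinv_0_lt_compat; lra |].
  exists (Rmax 0 (T * t)). intros v [s [Hs ->]].
  pose proof (phi_nonneg s).
  destruct (Rle_lt_dec T (exp s)) as [Hlarge | Hsmall].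
  - specialize (HT _ Hlarge). rewrite ln_exp in HT. fold (phi omega s) in HT.
    assert (Hphi : (t + 1) * s <= phi omega s).
    { apply Rmult_le_reg_l with (/ (t + 1)); [apply Rinv_0_lt_compat; lra |].
      rewrite <- Rmult_assoc, Rinv_l, Rmult_1_l by lra. exact HT. }
    apply Rle_trans with 0; [nra | apply Rmax_l].
  - pose proof (exp_ineq1_le s).
    apply Rle_trans with (T * t); [nra | apply Rmax_r].
Qed.

Lemma phi_star_lub t : 0 <= t -> is_lub (Young_set t) (phi_star omega t).
Proof.
  intros Ht. unfold phi_star. apply epsilon_spec.
  apply upper_bound_thm; [now apply Young_set_bound |].
  exists (0 * t - phi omega 0). exists 0. split; lra.
Qed.

Lemma Young_ineq t s : 0 <= t -> 0 <= s -> s * t - phi omega s <= phi_star omega t.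
Proof. intros Ht Hs. apply (proj1 (phi_star_lub t Ht)). now exists s. Qed.

Lemma phi_star_le t b : 0 <= t ->
  (forall s, 0 <= s -> s * t - phi omega s <= b) -> phi_star omega t <= b.
Proof.
  intros Ht H. apply (proj2 (phi_star_lub t Ht)). intros v [s [Hs ->]]. auto.
Qed.

Lemma phi_star_0 : phi_star omega 0 = 0.
Proof.
  apply Rle_antisym.
  - apply phi_star_le; [lra |]. intros s _. pose proof (phi_nonneg s). lra.
  - pose proof (Young_ineq 0 0). rewrite phi_0 in H. lra.
Qed.

Lemma phi_star_convex a b l : 0 <= a -> 0 <= b -> 0 <= l <= 1 ->
  phi_star omega (l * a + (1 - l) * b) <= l * phi_star omega a + (1 - l) * phi_star omega b.
Proof.
  intros Ha Hb Hl. apply phi_star_le; [nra |]. intros s Hs.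
  pose proof (Young_ineq a s Ha Hs). pose proof (Young_ineq b s Hb Hs). nra.
Qed.

Lemma phi_star_div_mono a b t : 0 < a -> a <= b -> 0 <= t ->
  / a * phi_star omega (a * t) <= / b * phi_star omega (b * t).
Proof.
  intros Ha Hab Ht. destruct Ht as [Ht | <-].
  - destruct Hab as [Hab | <-]; [| lra].
    pose proof (slope_le_right _ phi_star_convex 0 (a * t) (b * t)
      ltac:(lra) ltac:(split; nra)) as H.
    rewrite phi_star_0, !Rminus_0_r in H.
    replace (/ a * phi_star omega (a * t)) with (phi_star omega (a * t) / (a * t) * t)
      by (field; lra).
    replace (/ b * phi_star omega (b * t)) with (phi_star omega (b * t) / (b * t) * t)
      by (field; lra).
    apply Rmult_le_compat_r; lra.
  - rewrite !Rmult_0_r, phi_star_0. lra.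
Qed.

End YoungConjugate.

Section WeightMatrix.

Variable omega : R -> R.
Hypothesis Hw : is_weight_function omega.

Lemma W_pos y k : 0 < W omega y k.
Proof. apply exp_pos. Qed.

Lemma theta_pos y k : 0 < theta omega y k.
Proof. apply Rdiv_lt_0_compat; apply W_pos. Qed.

Lemma wseq_pos y k : 0 < wseq omega y k.
Proof. apply Rdiv_lt_0_compat; [apply W_pos | apply INR_fact_lt_0]. Qed.

Lemma wseq_ratio y k :
  wseq omega y (S k) / wseq omega y k = theta omega y (S k) / INR (S k).
Proof.
  unfold wseq, theta. replace (S k - 1)%nat with k by lia.
  change (Factorial.fact (S k)) with (S k * Factorial.fact k)%nat.
  rewrite mult_INR. pose proof (W_pos y k). pose proof (W_pos y (S k)).
  pose proof (INR_fact_lt_0 k). pose proof (lt_0_INR (S k) ltac:(lia)).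
  field. repeat split; lra.
Qed.

Lemma theta_exp_slope y k : 0 < y -> (1 <= k)%nat ->
  theta omega y k = exp ((phi_star omega (y * INR k) - phi_star omega (y * INR k - y)) / y).
Proof.
  intros Hy Hk. unfold theta, W. rewrite minus_INR by exact Hk. simpl (INR 1).
  replace (y * (INR k - 1)) with (y * INR k - y) by ring.
  replace (/ y * phi_star omega (y * INR k)) with
    ((phi_star omega (y * INR k) - phi_star omega (y * INR k - y)) / y
     + / y * phi_star omega (y * INR k - y)) by (field; lra).
  rewrite exp_plus. field. apply Rgt_not_eq, exp_pos.
Qed.

Lemma theta_mono a b i j : 0 < a -> 0 < b -> (1 <= i)%nat -> (1 <= j)%nat ->
  a * (INR i - 1) <= b * (INR j - 1) -> a * INR i <= b * INR j ->
  theta omega a i <= theta omega b j.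
Proof.
  intros Ha Hb Hi Hj H1 H2.
  rewrite !theta_exp_slope by assumption. apply exp_le_mono.
  apply le_INR in Hi, Hj. simpl (INR 1) in Hi, Hj.
  pose proof (slope_mono _ (phi_star_convex omega Hw)
    (a * INR i - a) (a * INR i) (b * INR j - b) (b * INR j)) as Hs.
  replace (a * INR i - (a * INR i - a)) with a in Hs by ring.
  replace (b * INR j - (b * INR j - b)) with b in Hs by ring.
  apply Hs; nra.
Qed.

Lemma theta_ge_Young x k s : 0 < x -> (1 <= k)%nat -> 0 <= s ->
  exp (s - phi omega s / (x * INR k)) <= theta omega x k.
Proof.
  intros Hx Hk Hs. rewrite theta_exp_slope by assumption. apply exp_le_mono.
  apply le_INR in Hk. simpl (INR 1) in Hk.
  assert (Hxk : 0 < x * INR k) by nra.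
  pose proof (slope_le_left _ (phi_star_convex omega Hw) 0 (x * INR k - x) (x * INR k)
    ltac:(lra) ltac:(split; nra)) as Hslope.
  rewrite phi_star_0, !Rminus_0_r in Hslope by assumption.
  replace (x * INR k - (x * INR k - x)) with x in Hslope by ring.
  eapply Rle_trans; [| exact Hslope].
  pose proof (Young_ineq omega Hw (x * INR k) s ltac:(lra) Hs).
  apply Rmult_le_reg_r with (x * INR k); [exact Hxk |].
  replace ((s - phi omega s / (x * INR k)) * (x * INR k))
    with (s * (x * INR k) - phi omega s) by (field; lra).
  replace (phi_star omega (x * INR k) / (x * INR k) * (x * INR k))
    with (phi_star omega (x * INR k)) by (field; lra).
  assumption.
Qed.

(* Take [exp s = e M k]; since [omega = o(t)], [phi s <= x k] for [k] large. *)
Lemma theta_div_index_unbounded :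
  (forall eps, 0 < eps -> exists T, forall t, T <= t -> omega t <= eps * t) ->
  forall x M, 0 < x -> 0 < M -> exists k, (1 <= k)%nat /\ M <= theta omega x k / INR k.
Proof.
  intros Hlittle x M Hx HM.
  pose proof (exp_pos 1) as He.
  destruct (Hlittle (x / (exp 1 * M))) as [T HT]; [apply Rdiv_lt_0_compat; nra |].
  destruct (INR_unbounded (Rmax T 1 / (exp 1 * M))) as [k Hk].
  assert (Hk1 : (1 <= k)%nat).
  { apply (INR_lt 0 k). simpl (INR 0). eapply Rlt_trans; [| exact Hk].
    apply Rdiv_lt_0_compat; [pose proof (Rmax_r T 1) |]; nra. }
  pose proof (Rmax_l T 1). pose proof (Rmax_r T 1).
  set (u := exp 1 * M * INR k).
  assert (Hu : Rmax T 1 <= u).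
  { unfold u. apply Rmult_lt_compat_l with (r := exp 1 * M) in Hk; [| nra].
    replace (exp 1 * M * (Rmax T 1 / (exp 1 * M))) with (Rmax T 1) in Hk by (field; lra).
    lra. }
  assert (Hphi : phi omega (ln u) <= x * INR k).
  { unfold phi. rewrite exp_ln by lra. eapply Rle_trans; [apply HT |].
    - lra.
    - unfold u. right. field. lra. }
  assert (Hs : 0 <= ln u).
  { rewrite <- ln_1. destruct (Rle_lt_or_eq_dec 1 u) as [Hlt | <-]; [lra | | lra].
    left; apply ln_increasing; lra. }
  pose proof (theta_ge_Young x k (ln u) Hx Hk1 Hs) as Htheta.
  exists k. split; [exact Hk1 |].
  apply le_INR in Hk1. simpl (INR 1) in Hk1.
  assert (Hexp : M * INR k <= exp (ln u - phi omega (ln u) / (x * INR k))).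
  { replace (M * INR k) with (exp (ln u - 1)).
    - apply exp_le_mono. apply Rplus_le_compat_l, Ropp_le_contravar.
      apply Rmult_le_reg_r with (x * INR k); [nra |].
      replace (phi omega (ln u) / (x * INR k) * (x * INR k)) with (phi omega (ln u))
        by (field; nra). lra.
    - unfold Rminus. rewrite exp_plus, exp_Ropp, exp_ln by lra. unfold u. field. lra. }
  apply Rmult_le_reg_r with (INR k); [lra |].
  replace (theta omega x k / INR k * INR k) with (theta omega x k) by (field; lra).
  lra.
Qed.

Lemma W_mul_le a b j k : 0 < a -> 2 * a <= b ->
  W omega a (j + k) <= W omega b j * W omega b k.
Proof.
  intros Ha Hb. unfold W. rewrite <- exp_plus. apply exp_le_mono.
  pose proof (pos_INR j). pose proof (pos_INR k).
  pose proof (phi_star_convex omega Hw (2 * a * INR j) (2 * a * INR k) (1 / 2)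
    ltac:(nra) ltac:(nra) ltac:(lra)) as Hmid.
  replace (1 / 2 * (2 * a * INR j) + (1 - 1 / 2) * (2 * a * INR k)) with (a * INR (j + k))
    in Hmid by (rewrite plus_INR; field).
  pose proof (phi_star_div_mono omega Hw (2 * a) b (INR j) ltac:(lra) Hb ltac:(lra)).
  pose proof (phi_star_div_mono omega Hw (2 * a) b (INR k) ltac:(lra) Hb ltac:(lra)).
  assert (/ a * phi_star omega (a * INR (j + k)) <=
    / (2 * a) * phi_star omega (2 * a * INR j) + / (2 * a) * phi_star omega (2 * a * INR k)).
  { apply Rmult_le_reg_l with a; [exact Ha |].
    replace (a * (/ a * phi_star omega (a * INR (j + k))))
      with (phi_star omega (a * INR (j + k))) by (field; lra).
    replace (a * (/ (2 * a) * phi_star omega (2 * a * INR j)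
                  + / (2 * a) * phi_star omega (2 * a * INR k)))
      with (1 / 2 * phi_star omega (2 * a * INR j)
            + (1 - 1 / 2) * phi_star omega (2 * a * INR k)) by (field; lra).
    exact Hmid. }
  lra.
Qed.

Lemma fact_mul_le j k : (Factorial.fact j * Factorial.fact k <= Factorial.fact (j + k))%nat.
Proof.
  induction k as [| k IH].
  - rewrite Nat.add_0_r. simpl. lia.
  - replace (j + S k)%nat with (S (j + k)) by lia. simpl Factorial.fact. nia.
Qed.

Lemma wseq_mul_le a b j k : 0 < a -> 2 * a <= b ->
  wseq omega a (j + k) <= wseq omega b j * wseq omega b k.
Proof.
  intros Ha Hb. unfold wseq.
  pose proof (W_mul_le a b j k Ha Hb).
  pose proof (le_INR _ _ (fact_mul_le j k)) as Hfact. rewrite mult_INR in Hfact.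
  pose proof (INR_fact_lt_0 j). pose proof (INR_fact_lt_0 k).
  pose proof (INR_fact_lt_0 (j + k)).
  pose proof (W_pos a (j + k)). pose proof (W_pos b j). pose proof (W_pos b k).
  replace (W omega b j / INR (Factorial.fact j) * (W omega b k / INR (Factorial.fact k)))
    with (W omega b j * W omega b k / (INR (Factorial.fact j) * INR (Factorial.fact k)))
    by (field; lra).
  apply Rdiv_le_cross; [lra | nra |].
  apply Rmult_le_compat; nra.
Qed.

End WeightMatrix.

Lemma least_nat (P : nat -> Prop) :
  (exists n, P n) -> exists n, P n /\ forall k, P k -> (n <= k)%nat.
Proof.
  intros Hex.
  destruct (dec_inh_nat_subset_has_unique_least_element P (fun n => classic (P n)) Hex)
    as [n [Hn _]].
  now exists n.
Qed.

Lemma argmin_le (v : nat -> R) K :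
  exists n, (n <= K)%nat /\ forall j, (j <= K)%nat -> v n <= v j.
Proof.
  induction K as [| K [n [HnK IH]]].
  - exists 0%nat. split; [lia |]. intros j Hj. replace j with 0%nat by lia. lra.
  - destruct (Rle_lt_dec (v n) (v (S K))) as [Hle | Hlt].
    + exists n. split; [lia |]. intros j Hj.
      destruct (Nat.eq_dec j (S K)) as [-> | Hne]; [exact Hle | apply IH; lia].
    + exists (S K). split; [lia |]. intros j Hj.
      destruct (Nat.eq_dec j (S K)) as [-> | Hne]; [lra |].
      specialize (IH j ltac:(lia)). lra.
Qed.

Lemma Gamma_under_spec (m : nat -> R) t : (exists k, m (S k) / m k >= / t) ->
  m (S (Gamma_under m t)) / m (Gamma_under m t) >= / t /\
  forall k, m (S k) / m k >= / t -> (Gamma_under m t <= k)%nat.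
Proof. intros H. unfold Gamma_under. apply epsilon_spec. now apply least_nat. Qed.

Section ExtremalIndices.

Variable m : nat -> R.
Hypothesis m_pos : forall k, 0 < m k.
Variable t : R.
Hypothesis t_pos : 0 < t.

Lemma term_le_succ_iff k : m k * t ^ k <= m (S k) * t ^ S k <-> m (S k) / m k >= / t.
Proof.
  pose proof (m_pos k) as Hm. pose proof (pow_lt t k t_pos) as Htk.
  assert (Hmt : 0 < m k * t ^ k) by nra.
  pose proof (Rinv_0_lt_compat t t_pos) as Htinv.
  assert (Ht : / t * t = 1) by (field; lra).
  replace (m (S k) * t ^ S k) with (m (S k) / m k * t * (m k * t ^ k)) by (simpl; field; lra).
  set (r := m (S k) / m k). set (P := m k * t ^ k) in *.
  split; intros H.
  - assert (1 <= r * t) by nra. apply Rle_ge. nra.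
  - assert (1 <= r * t) by nra. nra.
Qed.

(* Beyond [K] the terms [m_k t^k] are nondecreasing, so their infimum is a
   minimum over [0..K]. *)
Lemma min_term_attained K : (forall k, (K <= k)%nat -> m (S k) / m k >= / t) ->
  exists n, (n <= K)%nat /\ forall k, m n * t ^ n <= m k * t ^ k.
Proof.
  intros Htail. set (v k := m k * t ^ k).
  destruct (argmin_le v K) as [n [HnK Hmin]].
  assert (Hmono : forall d, v K <= v (K + d)%nat).
  { induction d as [| d IH]; [rewrite Nat.add_0_r; lra |].
    eapply Rle_trans; [exact IH |]. replace (K + S d)%nat with (S (K + d)) by lia.
    apply term_le_succ_iff, Htail. lia. }
  exists n. split; [exact HnK |]. intros k.
  destruct (Compare_dec.le_lt_dec k K) as [HkK | HKk]; [now apply Hmin |].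
  eapply Rle_trans; [apply Hmin, le_n |].
  replace k with (K + (k - K))%nat by lia. apply Hmono.
Qed.

Lemma Gamma_under_le_Gamma_bar_le K :
  (forall k, (K <= k)%nat -> m (S k) / m k >= / t) ->
  (Gamma_under m t <= Gamma_bar m t <= K)%nat.
Proof.
  intros Htail. destruct (min_term_attained K Htail) as [n [HnK Hmin]].
  set (E := fun v => exists k, v = m k * t ^ k).
  assert (Hglb : is_glb E (m n * t ^ n)).
  { split; [intros v [k ->]; apply Hmin | intros b Hb; apply Hb; now exists n]. }
  assert (Hh : h_fun m t = m n * t ^ n).
  { assert (Hh : is_glb E (h_fun m t)) by (unfold h_fun; apply epsilon_spec; eauto).
    apply Rle_antisym; [apply (proj1 Hh); now exists n | apply (proj2 Hh), Hglb]. }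
  assert (Hbar : h_fun m t = m (Gamma_bar m t) * t ^ Gamma_bar m t /\
    forall k, h_fun m t = m k * t ^ k -> (Gamma_bar m t <= k)%nat).
  { unfold Gamma_bar at 1 2 3. apply epsilon_spec, least_nat. now exists n. }
  destruct Hbar as [Hbar Hbar_min].
  assert (Hratio : m (S (Gamma_bar m t)) / m (Gamma_bar m t) >= / t).
  { apply term_le_succ_iff. rewrite <- Hbar, Hh. apply Hmin. }
  split.
  - apply (Gamma_under_spec m t (ex_intro _ (Gamma_bar m t) Hratio)), Hratio.
  - specialize (Hbar_min n Hh). lia.
Qed.

End ExtremalIndices.

(* [is_good omega] says: every [x > 0] admits [y > 0] and [C >= 1] with
   [theta_dominated omega x y C]. *)
Definition theta_dominated (omega : R -> R) (a b D : R) : Prop :=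
  forall j k : nat, (1 <= j)%nat -> (j <= k)%nat ->
    theta omega a j / INR j <= D * (theta omega b k / INR k).

Lemma theta_dominated_weaken omega a b C y D : is_weight_function omega ->
  0 < b -> b <= y -> 0 <= C <= D ->
  theta_dominated omega a b C -> theta_dominated omega a y D.
Proof.
  intros Hw Hb Hby HCD Hdom j k Hj Hjk.
  assert (Hk : (1 <= k)%nat) by lia.
  pose proof (le_INR _ _ Hk) as HkR. simpl (INR 1) in HkR.
  assert (Htheta : theta omega b k <= theta omega y k) by (apply (theta_mono omega Hw); try assumption; nra).
  pose proof (theta_pos omega b k).
  assert (Hdiv : theta omega b k / INR k <= theta omega y k / INR k).
  { apply Rmult_le_compat_r; [left; apply Rinv_0_lt_compat |]; lra. }
  assert (0 < theta omega b k / INR k) by (apply Rdiv_lt_0_compat; lra).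
  apply Rle_trans with (C * (theta omega b k / INR k)); [now apply Hdom | nra].
Qed.

(* The exceptional pair [(m, n) = (1, 2)] is what the constant [D] absorbs. *)
Lemma theta_div_index_le_quadruple omega x D m n : is_weight_function omega -> 0 < x ->
  1 <= D -> theta omega x 2 / 2 / theta omega (4 * x) 1 <= D ->
  (1 <= m)%nat -> (m <= n <= 2 * m)%nat ->
  theta omega x n / INR n <= D * (theta omega (4 * x) m / INR m).
Proof.
  intros Hw Hx HD1 HD2 Hm Hmn.
  pose proof (theta_pos omega (4 * x) m). pose proof (theta_pos omega (4 * x) 1).
  pose proof (theta_pos omega x n).
  destruct (classic (m = 1%nat /\ n = 2%nat)) as [[-> ->] | Hne].
  - simpl (INR 1). simpl (INR 2). replace (1 + 1) with 2 by ring.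
    apply Rmult_le_compat_r with (r := theta omega (4 * x) 1) in HD2; [| lra].
    replace (theta omega x 2 / 2 / theta omega (4 * x) 1 * theta omega (4 * x) 1)
      with (theta omega x 2 / 2) in HD2 by (field; lra).
    lra.
  - assert (Hmn4 : (n + 3 <= 4 * m)%nat) by lia.
    pose proof (le_INR _ _ Hm) as HmR. pose proof (le_INR _ _ (proj1 Hmn)) as HmnR.
    pose proof (le_INR _ _ (proj2 Hmn)) as Hn2. apply le_INR in Hmn4.
    rewrite plus_INR, mult_INR in Hmn4. rewrite mult_INR in Hn2.
    simpl (INR 1) in HmR. simpl (INR 3) in Hmn4. simpl (INR 4) in Hmn4.
    simpl (INR 2) in Hn2.
    assert (Htheta : theta omega x n <= theta omega (4 * x) m).
    { apply (theta_mono omega Hw); try lia; nra. }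
    apply Rle_trans with (theta omega (4 * x) m / INR m).
    + apply Rdiv_le_cross; nra.
    + assert (0 < theta omega (4 * x) m / INR m) by (apply Rdiv_lt_0_compat; lra). nra.
Qed.

Lemma wseq_ratio_transfer omega a b D s j k : 0 < D ->
  theta omega a (S j) / INR (S j) <= D * (theta omega b (S k) / INR (S k)) ->
  wseq omega a (S j) / wseq omega a j >= / s ->
  wseq omega b (S k) / wseq omega b k >= / (D * s).
Proof.
  intros HD Hdom Hj. rewrite wseq_ratio in *. rewrite Rinv_mult.
  apply Rle_ge, Rmult_le_reg_l with D; [exact HD |].
  rewrite <- Rmult_assoc, Rinv_r, Rmult_1_l by lra. lra.
Qed.

Lemma Gamma_chain_step omega a b D s N : 0 < D -> 0 < s ->
  theta_dominated omega a b D ->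
  wseq omega a (S N) / wseq omega a N >= / s ->
  (Gamma_under (wseq omega b) (D * s) <= Gamma_bar (wseq omega b) (D * s) <= N)%nat /\
  wseq omega b (S (Gamma_under (wseq omega b) (D * s)))
    / wseq omega b (Gamma_under (wseq omega b) (D * s)) >= / (D * s).
Proof.
  intros HD Hs Hdom HN.
  assert (Htail : forall k, (N <= k)%nat ->
    wseq omega b (S k) / wseq omega b k >= / (D * s)).
  { intros k Hk. apply (wseq_ratio_transfer omega a b D s N k HD); [apply Hdom; lia | exact HN]. }
  split.
  - apply Gamma_under_le_Gamma_bar_le; [apply wseq_pos | nra | exact Htail].
  - apply Gamma_under_spec. exists N. apply Htail, le_n.
Qed.

Lemma Gamma_index_chain omega x y2 y3 D t : is_weight_function omega ->
  (forall eps, 0 < eps -> exists T, forall t, T <= t -> omega t <= eps * t) ->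
  0 < x -> 0 < t -> 1 <= D -> theta omega x 2 / 2 / theta omega (4 * x) 1 <= D ->
  theta_dominated omega (4 * x) y2 D -> theta_dominated omega y2 y3 D ->
  (Gamma_bar (wseq omega y3) (D * (D * (D * t)))
     <= Gamma_under (wseq omega y2) (D * (D * t)))%nat /\
  (Gamma_under (wseq omega y2) (D * (D * t))
     <= Gamma_bar (wseq omega y2) (D * (D * t)))%nat /\
  (Gamma_bar (wseq omega y2) (D * (D * t)) <= Gamma_under (wseq omega (4 * x)) (D * t))%nat /\
  (2 * Gamma_under (wseq omega (4 * x)) (D * t) <= Gamma_under (wseq omega x) t)%nat.
Proof.
  intros Hw Hlittle Hx Ht HD1 HD2 Hdom12 Hdom23.
  set (Nx := Gamma_under (wseq omega x) t).
  assert (HNx : wseq omega x (S Nx) / wseq omega x Nx >= / t).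
  { apply Gamma_under_spec.
    destruct (theta_div_index_unbounded omega Hw Hlittle x (/ t) Hx
      ltac:(apply Rinv_0_lt_compat, Ht)) as [[| k] [Hk Hbig]]; [lia |].
    exists k. rewrite wseq_ratio. lra. }
  assert (Hhalf : exists k, (2 * k <= Nx <= 2 * k + 1)%nat)
    by (destruct (Nat.Even_or_Odd Nx) as [[k Hk] | [k Hk]]; exists k; lia).
  destruct Hhalf as [k Hk].
  assert (Hk_ratio : wseq omega (4 * x) (S k) / wseq omega (4 * x) k >= / (D * t)).
  { apply (wseq_ratio_transfer omega x (4 * x) D t Nx k); [lra | | exact HNx].
    apply theta_div_index_le_quadruple; auto; lia. }
  destruct (Gamma_under_spec _ _ (ex_intro _ k Hk_ratio)) as [HN1 HN1_min].
  specialize (HN1_min k Hk_ratio).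
  assert (HDt : 0 < D * t) by nra.
  destruct (Gamma_chain_step omega (4 * x) y2 D (D * t) _ ltac:(lra) HDt Hdom12 HN1)
    as [[H2u H2b] HN2].
  destruct (Gamma_chain_step omega y2 y3 D (D * (D * t)) _ ltac:(lra) ltac:(nra) Hdom23 HN2)
    as [[_ H3b] _].
  repeat split; (assumption || lia).
Qed.

Theorem proposition3p7 (omega : R -> R)
  (Hw : is_weight_function omega)
  (Hgood : is_good omega)
  (Hlittle : forall eps, 0 < eps -> exists T, forall t, T <= t -> omega t <= eps * t) :
  forall x, 0 < x ->
  exists y1 y2 y3 D,
    x <= y1 /\ y1 <= y2 /\ y2 <= y3 /\ 1 <= D /\
    2 * x <= y1 /\ 2 * y1 <= y2 /\
    (forall t, 0 < t ->
       INR (Gamma_bar (wseq omega y3) (D ^ 3 * t))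
         <= INR (Gamma_under (wseq omega y2) (D ^ 2 * t)) /\
       INR (Gamma_under (wseq omega y2) (D ^ 2 * t))
         <= INR (Gamma_bar (wseq omega y2) (D ^ 2 * t)) /\
       INR (Gamma_bar (wseq omega y2) (D ^ 2 * t))
         <= INR (Gamma_under (wseq omega y1) (D * t)) /\
       INR (Gamma_under (wseq omega y1) (D * t))
         <= INR (Gamma_under (wseq omega x) t) / 2) /\
    (forall j k : nat,
       wseq omega x (j + k) <= wseq omega y1 j * wseq omega y1 k) /\
    (forall j k : nat,
       wseq omega y1 (j + k) <= wseq omega y2 j * wseq omega y2 k).
Proof.
  intros x Hx.
  destruct (Hgood (4 * x)) as [g1 [Hg1 [C1 [HC1 Hdom1]]]]; [lra |].
  set (y2 := Rmax (8 * x) g1).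
  assert (Hy2 : 8 * x <= y2) by apply Rmax_l.
  destruct (Hgood y2) as [g2 [Hg2 [C2 [HC2 Hdom2]]]]; [lra |].
  set (y3 := Rmax y2 g2).
  set (D := Rmax (Rmax C1 C2) (Rmax 1 (theta omega x 2 / 2 / theta omega (4 * x) 1))).
  assert (HC1D : C1 <= D) by (eapply Rle_trans; apply Rmax_l).
  assert (HC2D : C2 <= D) by (eapply Rle_trans; [apply Rmax_r | apply Rmax_l]).
  assert (HD1 : 1 <= D) by (eapply Rle_trans; [apply Rmax_l | apply Rmax_r]).
  assert (HD2 : theta omega x 2 / 2 / theta omega (4 * x) 1 <= D)
    by (eapply Rle_trans; apply Rmax_r).
  exists (4 * x), y2, y3, D.
  assert (Hy3 : y2 <= y3) by apply Rmax_l.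
  do 6 (split; [lra |]).
  split; [| split; intros j k; apply (wseq_mul_le omega Hw); lra].
  intros t Ht. replace (D ^ 3 * t) with (D * (D * (D * t))) by ring.
  replace (D ^ 2 * t) with (D * (D * t)) by ring.
  destruct (Gamma_index_chain omega x y2 y3 D t Hw Hlittle Hx Ht HD1 HD2) as (H1 & H2 & H3 & H4).
  - apply (theta_dominated_weaken omega (4 * x) g1 C1); auto; [apply Rmax_r | lra].
  - apply (theta_dominated_weaken omega y2 g2 C2); auto; [apply Rmax_r | lra].
  - apply le_INR in H1, H2, H3, H4. rewrite mult_INR in H4. simpl (INR 2) in H4.
    repeat split; lra.
Qed.
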